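(* Let $G$ be a finite simple $P_4$-free graph (i.e. $G$ has no induced subgraph isomorphic to the path on four vertices) with $n$ vertices, and let $D$ be a dominating set of $G$ of minimum cardinality $\gamma(G)$. Then $$n-\gamma(G)\le \mathcal{C}_D(G)\le 2n-\gamma(G).$$
   Context: A set $D\subseteq V(G)$ is a dominating set of $G$ if every vertex of $V(G)\setminus D$ has a neighbor in $D$; $\gamma(G)$ is the minimum cardinality of a dominating set. For $D\subseteq V(G)$, $\mathcal{C}_D(G)=\sum_{u\in D}\deg_G(u)$. *)

From mathcomp Require Import all_boot all_order.
Set Implicit Arguments. Unset Strict Implicit. Unset Printing Implicit Defensive.

Definition simple_graph (T : finType) (e : rel T) : Prop :=
  symmetric e /\ irreflexive e.

Definition P4_free (T : finType) (e : rel T) : Prop :=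
  forall a b c d : T,
    [&& a != b, a != c, a != d, b != c, b != d & c != d] ->
    ~ [&& e a b, e b c, e c d, ~~ e a c, ~~ e b d & ~~ e a d].

Definition nbhd (T : finType) (e : rel T) (u : T) : {set T} := [set v | e u v].
Definition deg (T : finType) (e : rel T) (u : T) : nat := #|nbhd e u|.

Definition dominating (T : finType) (e : rel T) (D : {set T}) : bool :=
  [forall v, (v \notin D) ==> [exists u in D, e v u]].

Lemma dominating_setT (T : finType) (e : rel T) : dominating e [set: T].
Proof. by apply/forallP => v; rewrite in_setT. Qed.

Definition gamma (T : finType) (e : rel T) : nat :=
  #|[arg min_(D < [set: T] | dominating e D) #|D|]|.

Definition CD (T : finType) (e : rel T) (D : {set T}) : nat :=
  \sum_(u in D) deg e u.

From mathcomp Require Import all_boot all_order zify.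
Set Implicit Arguments. Unset Strict Implicit. Unset Printing Implicit Defensive.

(** Counting the pairs (v, u) with u in D adjacent to v gives
  CD(D) = sum_v |N(v) ∩ D|. Every vertex outside D contributes at least one,
  whence the lower bound. For the upper bound it suffices that every closed
  neighbourhood N[v] meets a minimum dominating set D in at most two vertices.
  In a P4-free graph the sets N(a) \ N[v], for neighbours a of v, form a chain
  under inclusion; so if N[v] ∩ D had three elements, replacing them by v and
  the neighbour w of v in D with the largest set N(w) \ N[v] would give a
  smaller dominating set. *)

Lemma gamma_min (T : finType) (e : rel T) (D : {set T}) :
  dominating e D -> gamma e <= #|D|.
Proof.
move=> domD; rewrite /gamma; case: arg_minnP; first exact: dominating_setT.
by move=> A _ /(_ D domD).
Qed.

Definition closed_nbhd (T : finType) (e : rel T) (v : T) : {set T} :=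
  v |: nbhd e v.

Definition outer_nbhd (T : finType) (e : rel T) (v a : T) : {set T} :=
  nbhd e a :\: closed_nbhd e v.

Section SimpleGraph.

Variables (T : finType) (e : rel T).
Hypotheses (e_sym : symmetric e) (e_irr : irreflexive e).

Lemma CD_sum_nbhd (D : {set T}) : CD e D = \sum_v #|D :&: nbhd e v|.
Proof.
rewrite /CD /deg; under eq_bigr do rewrite -sum1_card.
rewrite (exchange_big_dep predT) //=; apply: eq_bigr => v _.
rewrite sum1dep_card; apply: eq_card => u.
by rewrite !inE e_sym.
Qed.

Lemma card_closed_nbhd (A : {set T}) v :
  #|A :&: closed_nbhd e v| = (v \in A) + #|A :&: nbhd e v|.
Proof.
rewrite (cardsD1 v) !inE eqxx andbT; congr (_ + _); apply: eq_card => u.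
by rewrite !inE; case: eqVneq => [->|]; rewrite ?e_irr ?andbF.
Qed.

Lemma card_compl_le_CD (D : {set T}) :
  dominating e D -> #|T| - #|D| <= CD e D.
Proof.
move=> /forallP domD; rewrite -[#|T|](cardsC D) addKn CD_sum_nbhd -sum1_card.
rewrite [X in X <= _]big_mkcond /=; apply: leq_sum => v _.
case: ifP => //; rewrite inE => vD; rewrite card_gt0.
have /existsP [u /andP [uD vu]] := implyP (domD v) vD.
by apply/set0Pn; exists u; rewrite !inE uD.
Qed.

Lemma CD_le_twice_card_sub (D : {set T}) :
  (forall v, #|D :&: closed_nbhd e v| <= 2) -> CD e D <= 2 * #|T| - #|D|.
Proof.
move=> D_N2; rewrite leq_subRL; last first.
  by rewrite (leq_trans (max_card _)) ?leq_pmull.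
rewrite addnC CD_sum_nbhd -sum1_card [\sum_(i in D) 1]big_mkcond /= -big_split /=.
rewrite -sum1_card big_distrr /=; apply: leq_sum => v _.
by rewrite muln1 addnC -(card_closed_nbhd D v) D_N2.
Qed.

Lemma dominating_exchange (D : {set T}) v w : dominating e D -> e v w ->
    (forall d, d \in D -> e v d -> outer_nbhd e v d \subset outer_nbhd e v w) ->
  dominating e ([set v; w] :|: (D :\: closed_nbhd e v)).
Proof.
move=> /forallP domD vw w_max; apply/forallP => u; apply/implyP.
rewrite !inE !negb_or => /andP [/andP [uv uw] uD'].
have dom_by x : x \in [set v; w] :|: (D :\: closed_nbhd e v) -> e u x ->
    [exists x in [set v; w] :|: (D :\: closed_nbhd e v), e u x].
  by move=> xD' ux; apply/existsP; exists x; rewrite xD' ux.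
have vD' : v \in [set v; w] :|: (D :\: closed_nbhd e v) by rewrite !inE eqxx.
have wD' : w \in [set v; w] :|: (D :\: closed_nbhd e v) by rewrite !inE eqxx orbT.
have [uD|uD] := boolP (u \in D).
  by apply: (dom_by v vD'); move: uD'; rewrite uD (negbTE uv) andbT negbK e_sym.
have /existsP [d /andP [dD ud]] := implyP (domD u) uD.
have [dN|dN] := boolP (d \in closed_nbhd e v); last first.
  by apply: (dom_by d); rewrite // in_setU in_setD dN dD orbT.
move: dN; rewrite !inE => /orP [/eqP dv|vd]; first by apply: (dom_by v vD'); rewrite -dv.
have [uv'|vu] := boolP (e u v); first exact: dom_by uv'.
apply: (dom_by w wD'); rewrite e_sym.
have u_out : u \in outer_nbhd e v d by rewrite !inE negb_or uv e_sym vu e_sym.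
by have := subsetP (w_max d dD vd) u u_out; rewrite !inE => /andP [].
Qed.

End SimpleGraph.

Section P4Free.

Variables (T : finType) (e : rel T).
Hypotheses (e_sym : symmetric e) (e_irr : irreflexive e) (e_P4 : P4_free e).

Lemma no_induced_P4 a b c d :
  e a b -> e b c -> e c d -> ~~ e a c -> ~~ e b d -> ~~ e a d -> False.
Proof.
move=> ab bc cd ac bd ad.
have neq x y : e x y -> x != y by apply: contraTneq => ->; rewrite e_irr.
apply: (e_P4 (a := a) (b := b) (c := c) (d := d)); last by rewrite ab bc cd ac bd ad.
have ac' : a != c by apply: contraNneq ad => ->.
have bd' : b != d by apply: contraNneq ad => <-.
have ad' : a != d by apply: contraNneq ac => ->; rewrite e_sym.
by rewrite ac' bd' ad' !neq.
Qed.

Lemma outer_nbhd_total v a b : e v a -> e v b ->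
  (outer_nbhd e v a \subset outer_nbhd e v b)
  || (outer_nbhd e v b \subset outer_nbhd e v a).
Proof.
move=> va vb; apply: contraT; rewrite negb_or => /andP [].
move=> /subsetPn [p]; rewrite !inE negb_or => /andP [/andP [pv vp] ap].
rewrite pv vp /= => bp.
move=> /subsetPn [q]; rewrite !inE negb_or => /andP [/andP [qv vq] bq].
rewrite qv vq /= => aq; exfalso.
have [ab|ab] := boolP (e a b); last first.
  by apply: (no_induced_P4 (a := p) (b := a) (c := v) (d := b)); rewrite // e_sym.
have [pq|pq] := boolP (e p q).
  exact: (no_induced_P4 (a := v) (b := a) (c := p) (d := q)).
by apply: (no_induced_P4 (a := p) (b := a) (c := b) (d := q)); rewrite // e_sym.
Qed.

Lemma outer_nbhd_max v (B : {set T}) : B \subset nbhd e v -> B != set0 ->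
  exists2 w, w \in B &
    forall d, d \in B -> outer_nbhd e v d \subset outer_nbhd e v w.
Proof.
move=> /subsetP Bv /set0Pn [a0 a0B].
have vB d : d \in B -> e v d by move=> /Bv; rewrite inE.
case: (arg_maxnP (fun a => #|outer_nbhd e v a|) a0B) => w wB wmax.
exists w => // d dB.
have /orP [//|wd] := outer_nbhd_total (vB d dB) (vB w wB).
suff /eqP <- : outer_nbhd e v w == outer_nbhd e v d by [].
by rewrite eqEcard wd; exact: wmax.
Qed.

Lemma min_dominating_closed_nbhd (D : {set T}) v :
  dominating e D -> #|D| = gamma e -> #|D :&: closed_nbhd e v| <= 2.
Proof.
move=> domD minD; rewrite leqNgt; apply/negP => N3.
have NvD : D :&: nbhd e v != set0.
  rewrite -card_gt0; move: N3; rewrite card_closed_nbhd //.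
  by case: (v \in D) => /=; lia.
have [w wB w_max] := outer_nbhd_max (subsetIr D (nbhd e v)) NvD.
have vw : e v w by move: wB; rewrite !inE => /andP [].
have w_max' d : d \in D -> e v d -> outer_nbhd e v d \subset outer_nbhd e v w.
  by move=> dD vd; apply: w_max; rewrite !inE dD.
have := gamma_min (dominating_exchange e_sym domD vw w_max').
rewrite -minD cardsU cardsD cards2.
have := subset_leq_card (subsetIl D (closed_nbhd e v)).
by case: (v != w); lia.
Qed.

End P4Free.

Theorem mainTheorem5 (T : finType) (e : rel T) (D : {set T}) :
  simple_graph e -> P4_free e ->
  dominating e D -> #|D| = gamma e ->
  #|T| - gamma e <= CD e D <= 2 * #|T| - gamma e.
Proof.
move=> [e_sym e_irr] e_P4 domD minD; rewrite -minD.
rewrite card_compl_le_CD //=; apply: CD_le_twice_card_sub => // v.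
exact: min_dominating_closed_nbhd.
Qed.
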